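(* Fix $\alpha>0$. As $\Gamma\to\infty$, \[ 2\cdot\max\left\{ \sup_{0\leq\rho\leq1}\frac{\alpha E_{0}(\rho,\Gamma)}{\rho+\alpha},\ \sup_{\rho\geq1}\frac{\alpha E_{x}(\rho,\Gamma)}{\rho+\alpha}\right\} =[1+o(1)]\cdot\alpha\log(\Gamma), \] where $E_{0}(\rho,\Gamma)=\frac{1}{2}\left[(1-\beta_{0})(1+\rho)+\Gamma+\log\left(\beta_{0}-\frac{\Gamma}{1+\rho}\right)+\rho\log(\beta_{0})\right]$, $\beta_{0}=\frac{1}{2}\left(1+\frac{\Gamma}{1+\rho}\right)\left[1+\sqrt{1-\frac{4\Gamma\rho}{(1+\rho+\Gamma)^{2}}}\right]$, $E_{x}(\rho,\Gamma)=(1-\beta_{x})\rho+\frac{\Gamma}{2}+\frac{\rho}{2}\log\left[\beta_{x}\left(\beta_{x}-\frac{\Gamma}{2\rho}\right)\right]$, $\beta_{x}=\frac{1}{2}+\frac{\Gamma}{4\rho}+\frac{1}{2}\sqrt{1+\frac{\Gamma^{2}}{4\rho^{2}}}$.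
   Context: The left-hand side is the paper's achievability (lower) bound on the optimal MP$\alpha$E exponent per unit bandwidth $F_\alpha(\Gamma)$ for conveying a parameter over a band-limited AWGN channel at SNR $\Gamma$; $E_0$ and $E_x$ are Gallager's random-coding and expurgated functions for the Gaussian channel. Logarithms are natural. *)

From Stdlib Require Import Reals.
From Coquelicot Require Import Coquelicot.
Open Scope R_scope.

(* Gallager's random-coding exponent for the Gaussian channel (natural logs). *)
Definition beta0 (rho G : R) : R :=
  / 2 * (1 + G / (1 + rho)) * (1 + sqrt (1 - 4 * G * rho / (1 + rho + G) ^ 2)).

Definition E0 (rho G : R) : R :=
  / 2 * ((1 - beta0 rho G) * (1 + rho) + G
         + ln (beta0 rho G - G / (1 + rho)) + rho * ln (beta0 rho G)).

Definition betax (rho G : R) : R :=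
  / 2 + G / (4 * rho) + / 2 * sqrt (1 + G ^ 2 / (4 * rho ^ 2)).

Definition Ex (rho G : R) : R :=
  (1 - betax rho G) * rho + G / 2
  + rho / 2 * ln (betax rho G * (betax rho G - G / (2 * rho))).

Definition sup_E0 (alpha G : R) : Rbar :=
  Lub_Rbar (fun y => exists rho, 0 <= rho <= 1 /\ y = alpha * E0 rho G / (rho + alpha)).

Definition sup_Ex (alpha G : R) : Rbar :=
  Lub_Rbar (fun y => exists rho, 1 <= rho /\ y = alpha * Ex rho G / (rho + alpha)).

(* the left-hand side: 2 * max { sup_E0, sup_Ex } (real part; finiteness asserted separately) *)
Definition lhs (alpha G : R) : R :=
  2 * Rmax (real (sup_E0 alpha G)) (real (sup_Ex alpha G)).

(* Upper bound: E0 <= rho (2 + ln (1 + G)) / 2 on [0, 1] and Ex <= rho (1 + ln (1 + G)) / 2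
   on [1, oo), so every ratio alpha E / (rho + alpha) is at most alpha (2 + ln (1 + G)) / 2.
   Lower bound: Ex K G >= K ln (G / (4 K)) / 2, so the expurgated supremum alone gives
   alpha K / (K + alpha) (ln G - ln (4 K)); letting K grow, its ratio to alpha ln G
   tends to K / (K + alpha), which is arbitrarily close to 1. *)
From Stdlib Require Import Reals Lra Psatz.
From Coquelicot Require Import Coquelicot.
Open Scope R_scope.

(* [ln] is [0] on nonpositive arguments, which is why no positivity is assumed. *)
Lemma ln_le1_nonpos x : x <= 1 -> ln x <= 0.
Proof.
  intros Hx1. destruct (Rlt_dec 0 x) as [Hx0|Hx0].
  - rewrite <- ln_1. apply ln_le; assumption.
  - unfold ln. destruct (Rlt_dec 0 x); [contradiction|lra].
Qed.

Lemma ln_le_of_ge1 x y : 1 <= y -> x <= y -> ln x <= ln y.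
Proof.
  intros Hy Hxy. destruct (Rlt_dec 0 x) as [Hx|Hx].
  - apply ln_le; assumption.
  - apply Rle_trans with 0.
    + apply ln_le1_nonpos. lra.
    + rewrite <- ln_1. apply ln_le; lra.
Qed.

Lemma E0_le rho G : 0 <= rho -> 0 <= G -> E0 rho G <= rho / 2 * (2 + ln (1 + G)).
Proof.
  intros Hr HG. unfold E0, beta0.
  set (a := 1 + rho + G).
  set (x := 4 * G * rho / a ^ 2).
  set (S := sqrt (1 - x)).
  set (q := G / (1 + rho)).
  assert (Ha : 0 < a) by (unfold a; lra).
  assert (Hxa2 : x * (a * a) = 4 * G * rho) by (unfold x, a; field; lra).
  assert (Haa : 0 < a * a) by nra.
  assert (Hx0 : 0 <= x) by nra.
  assert (H4 : 4 * G * rho <= a * a) by (unfold a; pose proof (pow2_ge_0 (rho - G)); nra).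
  assert (Hx1 : x <= 1) by nra.
  assert (HS0 : 0 <= S) by apply sqrt_pos.
  assert (HS2 : S * S = 1 - x) by (apply sqrt_sqrt; lra).
  assert (HS1 : S <= 1) by nra.
  assert (HSx : 1 - x <= S) by nra.
  assert (Hq1 : q * (1 + rho) = G) by (unfold q; field; lra).
  assert (HqG : 0 <= q <= G) by nra.
  assert (Hqa : (1 + q) * (1 + rho) = a) by (unfold a; lra).
  (* 1 - S <= 1 - S^2 = x, and a x = 4 G rho / a <= 4 rho *)
  assert (linear_part : (1 - / 2 * (1 + q) * (1 + S)) * (1 + rho) + G <= 2 * rho).
  { replace ((1 - / 2 * (1 + q) * (1 + S)) * (1 + rho) + G) with (a * (1 - S) / 2)
      by (rewrite <- Hqa; unfold a in *; lra).
    assert (a * (1 - S) <= x * a) by nra.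
    assert (x * a * a <= 4 * rho * a) by (rewrite Rmult_assoc, Hxa2; unfold a; nra).
    assert (x * a <= 4 * rho) by nra.
    lra. }
  assert (first_log : ln (/ 2 * (1 + q) * (1 + S) - q) <= 0) by (apply ln_le1_nonpos; nra).
  assert (second_log : rho * ln (/ 2 * (1 + q) * (1 + S)) <= rho * ln (1 + G)).
  { apply Rmult_le_compat_l; [lra|]. apply ln_le_of_ge1; nra. }
  lra.
Qed.

(* With t = G / (2 rho) one has betax = (1 + t + s) / 2 where s = sqrt (1 + t^2), and
   betax (betax - t) = (1 + s) / 2. *)
Lemma Ex_closed_form rho G : 0 < rho ->
  let t := G / (2 * rho) in let s := sqrt (1 + t * t) in
  Ex rho G = rho * ((1 + t - s) / 2) + rho / 2 * ln ((1 + s) / 2).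
Proof.
  intros Hr t s. unfold Ex, betax.
  assert (Ht : G ^ 2 / (4 * rho ^ 2) = t * t) by (unfold t; field; lra).
  fold t. rewrite Ht. fold s.
  assert (Hs2 : s * s = 1 + t * t) by (apply sqrt_sqrt; nra).
  replace (/ 2 + G / (4 * rho) + / 2 * s) with ((1 + t + s) / 2) by (unfold t; field; lra).
  replace ((1 + t + s) / 2 * ((1 + t + s) / 2 - t)) with ((1 + s) / 2) by nra.
  unfold t. field. lra.
Qed.

Lemma Ex_bounds rho G : 1 <= rho -> 0 < G ->
  rho / 2 * ln (G / (4 * rho)) <= Ex rho G <= rho / 2 * (1 + ln (1 + G)).
Proof.
  intros Hr HG. rewrite (Ex_closed_form rho G) by lra.
  set (t := G / (2 * rho)). set (s := sqrt (1 + t * t)).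
  assert (Ht0 : 0 < t) by (unfold t; apply Rdiv_lt_0_compat; lra).
  assert (HtG : t <= G / 2).
  { unfold t. apply Rmult_le_reg_r with (2 * rho); [lra|].
    replace (G / (2 * rho) * (2 * rho)) with G by (field; lra). nra. }
  assert (Hs0 : 0 <= s) by apply sqrt_pos.
  assert (Hs2 : s * s = 1 + t * t) by (apply sqrt_sqrt; nra).
  assert (Hts : t <= s <= 1 + t) by nra.
  replace (G / (4 * rho)) with (t / 2) by (unfold t; field; lra).
  split.
  - assert (ln (t / 2) <= ln ((1 + s) / 2)) by (apply ln_le; lra).
    assert (rho / 2 * ln (t / 2) <= rho / 2 * ln ((1 + s) / 2))
      by (apply Rmult_le_compat_l; lra).
    nra.
  - assert (ln ((1 + s) / 2) <= ln (1 + G)) by (apply ln_le_of_ge1; lra).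
    assert (rho / 2 * ln ((1 + s) / 2) <= rho / 2 * ln (1 + G))
      by (apply Rmult_le_compat_l; lra).
    nra.
Qed.

Lemma Lub_Rbar_bounded (E : R -> Prop) y0 B : E y0 -> (forall y, E y -> y <= B) ->
  is_finite (Lub_Rbar E) /\ (forall y, E y -> y <= real (Lub_Rbar E)) /\
  real (Lub_Rbar E) <= B.
Proof.
  intros Hy0 HB. destruct (Lub_Rbar_correct E) as [Hub Hlub].
  assert (HleB : Rbar_le (Lub_Rbar E) B) by (apply Hlub; intros y Hy; apply HB, Hy).
  pose proof (Hub y0 Hy0) as Hge.
  destruct (Lub_Rbar E) as [r| |]; simpl in *; try contradiction.
  repeat split; auto.
Qed.

Lemma ratio_le a rho E L : 0 < a -> 0 <= rho -> 0 <= L -> E <= rho / 2 * L ->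
  a * E / (rho + a) <= a * L / 2.
Proof.
  intros Ha Hr HL HE. apply Rmult_le_reg_r with (rho + a); [lra|].
  replace (a * E / (rho + a) * (rho + a)) with (a * E) by (field; lra). nra.
Qed.

Section Suprema.

Variables alpha G : R.
Hypothesis halpha : 0 < alpha.
Hypothesis hG : 1 < G.

Let ln1pG_ge0 : 0 <= ln (1 + G).
Proof. rewrite <- ln_1. apply ln_le; lra. Qed.

Lemma sup_E0_bounded :
  is_finite (sup_E0 alpha G) /\ real (sup_E0 alpha G) <= alpha * (2 + ln (1 + G)) / 2.
Proof.
  destruct (Lub_Rbar_bounded
    (fun y => exists rho, 0 <= rho <= 1 /\ y = alpha * E0 rho G / (rho + alpha))
    (alpha * E0 0 G / (0 + alpha)) (alpha * (2 + ln (1 + G)) / 2)) as [Hfin [_ Hle]].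
  - exists 0. split; [lra|reflexivity].
  - intros y [rho [Hr ->]]. apply ratio_le; try lra. apply E0_le; lra.
  - split; assumption.
Qed.

Lemma sup_Ex_bounded :
  is_finite (sup_Ex alpha G) /\ real (sup_Ex alpha G) <= alpha * (2 + ln (1 + G)) / 2 /\
  forall K, 1 <= K -> alpha * Ex K G / (K + alpha) <= real (sup_Ex alpha G).
Proof.
  destruct (Lub_Rbar_bounded
    (fun y => exists rho, 1 <= rho /\ y = alpha * Ex rho G / (rho + alpha))
    (alpha * Ex 1 G / (1 + alpha)) (alpha * (2 + ln (1 + G)) / 2)) as [Hfin [Hub Hle]].
  - exists 1. split; [lra|reflexivity].
  - intros y [rho [Hr ->]].
    assert (alpha * Ex rho G / (rho + alpha) <= alpha * (1 + ln (1 + G)) / 2)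
      by (apply ratio_le; try lra; apply Ex_bounds; lra).
    lra.
  - repeat split; try assumption. intros K HK. apply Hub. exists K. split; [assumption|reflexivity].
Qed.

Lemma lhs_le : lhs alpha G <= alpha * (3 + ln G).
Proof.
  destruct sup_E0_bounded as [_ H0]. destruct sup_Ex_bounded as [_ [Hx _]].
  assert (ln (1 + G) <= ln 2 + ln G) by (rewrite <- ln_mult by lra; apply ln_le; lra).
  assert (ln 2 < 1).
  { rewrite <- (ln_exp 1). apply ln_increasing; [lra|]. pose proof (exp_ineq1 1); lra. }
  unfold lhs. pose proof (Rmax_lub _ _ _ H0 Hx). nra.
Qed.

Lemma lhs_ge K : 1 <= K -> alpha * K / (K + alpha) * (ln G - ln (4 * K)) <= lhs alpha G.
Proof.
  intros HK. destruct sup_Ex_bounded as [_ [_ Hsup]].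
  destruct (Ex_bounds K G HK ltac:(lra)) as [HEx _].
  rewrite ln_div in HEx by lra.
  unfold lhs. pose proof (Rmax_r (real (sup_E0 alpha G)) (real (sup_Ex alpha G))).
  pose proof (Hsup K HK) as HK'.
  apply Rle_trans with (2 * (alpha * Ex K G / (K + alpha))); [|lra].
  apply Rmult_le_reg_r with (K + alpha); [lra|].
  replace (alpha * K / (K + alpha) * (ln G - ln (4 * K)) * (K + alpha))
    with (alpha * (K * (ln G - ln (4 * K)))) by (field; lra).
  replace (2 * (alpha * Ex K G / (K + alpha)) * (K + alpha)) with (alpha * (2 * Ex K G))
    by (field; lra).
  apply Rmult_le_compat_l; lra.
Qed.

End Suprema.

Lemma eventually_lt_mul_ln d eps : 0 < eps ->
  Rbar_locally p_infty (fun G => 1 < G /\ d < eps * ln G).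
Proof.
  intros Heps. apply filter_and.
  - exists 1. auto.
  - apply (filter_imp (fun G => d / eps < ln G)).
    + intros G HG. apply Rmult_lt_reg_r with (/ eps).
      * apply Rinv_0_lt_compat, Heps.
      * replace (eps * ln G * / eps) with (ln G) by (field; lra). exact HG.
    + exact (proj2 (is_lim_spec _ _ _) is_lim_ln_p (d / eps)).
Qed.

(* The lower bound comes from the single value rho = K := 1 + 2 alpha / eps, for which
   K / (K + alpha) >= 1 - eps / 2. *)
Lemma lhs_near_alpha_ln alpha eps : 0 < alpha -> 0 < eps <= 1 ->
  Rbar_locally p_infty
    (fun G => (1 - eps) * (alpha * ln G) < lhs alpha G < (1 + eps) * (alpha * ln G)).
Proof.
  intros Ha Heps.
  set (K := 1 + 2 * alpha / eps).
  assert (HK : eps / 2 * K = eps / 2 + alpha) by (unfold K; field; lra).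
  assert (HK1 : 1 <= K) by nra.
  set (c := ln (4 * K)).
  assert (Hc : 0 <= c) by (unfold c; rewrite <- ln_1; apply ln_le; lra).
  apply (filter_imp (fun G => (1 < G /\ 3 < eps * ln G) /\ (1 < G /\ c < eps / 2 * ln G))).
  2: { apply filter_and; apply eventually_lt_mul_ln; lra. }
  intros G [[HG H3] [_ Hcl]].
  pose proof (lhs_le alpha G Ha HG) as Hup.
  pose proof (lhs_ge alpha G Ha HG K HK1) as Hlow. fold c in Hlow.
  set (L := ln G) in *.
  assert (HL : 0 < L) by nra.
  assert (Hratio : 1 - eps / 2 <= K / (K + alpha)).
  { apply Rmult_le_reg_r with (K + alpha); [lra|].
    replace (K / (K + alpha) * (K + alpha)) with K by (field; lra). nra. }
  split; [|nra].
  replace (alpha * K / (K + alpha)) with (alpha * (K / (K + alpha))) in Hlow by (field; lra).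
  assert (Hlc : 0 < L - c) by nra.
  assert (alpha * (1 - eps / 2) * (L - c) <= alpha * (K / (K + alpha)) * (L - c))
    by (apply Rmult_le_compat_r; nra).
  assert (Hgap : (1 - eps) * L < (1 - eps / 2) * (L - c)) by nra.
  assert (alpha * ((1 - eps) * L) < alpha * ((1 - eps / 2) * (L - c)))
    by (apply Rmult_lt_compat_l; assumption).
  lra.
Qed.

Lemma ratio_close_to_1 x d e : 0 < d -> (1 - e) * d < x < (1 + e) * d ->
  Rabs (x / d - 1) < e.
Proof.
  intros Hd Hx. replace (x / d - 1) with ((x - d) / d) by (field; lra).
  rewrite Rabs_div by lra. rewrite (Rabs_right d) by lra.
  apply Rmult_lt_reg_r with d; [lra|].
  replace (Rabs (x - d) / d * d) with (Rabs (x - d)) by (field; lra).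
  apply Rabs_def1; lra.
Qed.

Theorem mainTheorem6 (alpha : R) (halpha : 0 < alpha) :
  Rbar_locally p_infty (fun G => is_finite (sup_E0 alpha G) /\ is_finite (sup_Ex alpha G)) /\
  is_lim (fun G => lhs alpha G / (alpha * ln G)) p_infty 1.
Proof.
  split.
  - exists 1. intros G HG. split.
    + apply (sup_E0_bounded alpha G halpha HG).
    + apply (sup_Ex_bounded alpha G halpha HG).
  - apply is_lim_spec. intros [eps Heps]. simpl pos.
    set (e := Rmin eps 1).
    assert (He : 0 < e <= 1) by (split; [apply Rmin_pos; lra | apply Rmin_r]).
    apply (filter_imp (F := Rbar_locally p_infty) (fun G => (1 < G /\ 0 < e * ln G) /\
      (1 - e) * (alpha * ln G) < lhs alpha G < (1 + e) * (alpha * ln G))).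
    + intros G [[_ HL] Hnear]. apply Rlt_le_trans with e; [|apply Rmin_l].
      apply ratio_close_to_1; [nra | exact Hnear].
    + apply filter_and; [apply eventually_lt_mul_ln | apply lhs_near_alpha_ln]; lra.
Qed.
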